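(* Let $m,n\ge1$ and $\rho\in\mathfrak D(\mathcal H^{(m)}\otimes\mathcal H^{(n)})$. Then $$\mathtt p\big(\mathtt{AND}^{(m,n)}(\rho)\big)\le \mathtt p\big(Red^{(1)}_{[m,n]}(\rho)\big)\quad\text{and}\quad \mathtt p\big(\mathtt{AND}^{(m,n)}(\rho)\big)\le \mathtt p\big(Red^{(2)}_{[m,n]}(\rho)\big).$$
   Context: For $n\ge1$, $\mathcal H^{(n)}=(\mathbb C^2)^{\otimes n}$ with canonical basis $|x_1,\dots,x_n\rangle$, $x_i\in\{0,1\}$, $|0\rangle=(1,0)$, $|1\rangle=(0,1)$; $\mathcal H^{(m)}\otimes\mathcal H^{(n)}=\mathcal H^{(m+n)}$. $\mathfrak D(\mathcal H^{(n)})$ is the set of density operators on $\mathcal H^{(n)}$. $P_1^{(n)}$ (resp. $P_0^{(n)}$) is the projection onto the span of canonical basis vectors with last bit $x_n=1$ (resp. $0$), and $\mathtt p(\rho)=\mathrm{tr}(P_1^{(n)}\rho)$ for $\rho\in\mathfrak D(\mathcal H^{(n)})$. $Red^{(1)}_{[m,n]}(\rho)$ and $Red^{(2)}_{[m,n]}(\rho)$ are the reduced states (partial traces) of $\rho$ on the first factor $\mathcal H^{(m)}$ and on the second factor $\mathcal H^{(n)}$ respectively. The Toffoli gate $\mathtt T^{(m,n,1)}$ on $\mathcal H^{(m+n+1)}$ acts by $|x_1,\dots,x_m,y_1,\dots,y_n,z\rangle\mapsto|x_1,\dots,x_m,y_1,\dots,y_n\rangle\otimes|x_my_n\oplus z\rangle$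 ($\oplus$ = addition mod 2), and $\mathtt{AND}^{(m,n)}(\rho)=\mathtt T^{(m,n,1)}(\rho\otimes P_0^{(1)})\mathtt T^{(m,n,1)\dagger}$. *)

(* Qubit registers H^(n) = (C^2)^{(x)n} represented by
   matrices 'M[C]_(2^n), over an arbitrary numeric closed field C
   (the complex numbers being the intended instance). *)
From HB Require Import structures.
From mathcomp Require Import all_boot all_order all_algebra.
Set Implicit Arguments. Unset Strict Implicit. Unset Printing Implicit Defensive.
Import Order.TTheory GRing.Theory Num.Theory.
Local Open Scope ring_scope.

(* Canonical basis index convention: |x_1,...,x_N> <-> k = sum_i x_i 2^(N-i),
   so the last bit x_N is k %% 2, and H^(m) (x) H^(n) = H^(m+n) via
   |i> (x) |j> <-> |i * 2^n + j> (Kronecker ordering). *)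

(* the natural number k viewed as an index of 'I_(2^N) (exact for k < 2^N) *)
Definition bidx (N k : nat) : 'I_(2 ^ N) :=
  Ordinal (ltn_pmod k (expn_gt0 2 N)).

Definition adjmx (C : numClosedFieldType) (p q : nat) (A : 'M[C]_(p, q))
  : 'M[C]_(q, p) := (map_mx Num.conj A)^T.

Definition psdmx (C : numClosedFieldType) (N : nat) (A : 'M[C]_N) : Prop :=
  forall u : 'cV[C]_N, 0 <= (adjmx u *m A *m u) 0 0.

Definition density (C : numClosedFieldType) (N : nat) (rho : 'M[C]_(2 ^ N))
  : Prop := psdmx rho /\ \tr rho = 1.

Definition P1 (C : numClosedFieldType) (N : nat) : 'M[C]_(2 ^ N) :=
  \matrix_(k, l) ((k == l) && odd k)%:R.
Definition P0 (C : numClosedFieldType) (N : nat) : 'M[C]_(2 ^ N) :=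
  \matrix_(k, l) ((k == l) && ~~ odd k)%:R.

Definition prob1 (C : numClosedFieldType) (N : nat) (rho : 'M[C]_(2 ^ N)) : C :=
  \tr (P1 C N *m rho).

Definition tensmx (C : numClosedFieldType) (m n : nat)
  (A : 'M[C]_(2 ^ m)) (B : 'M[C]_(2 ^ n)) : 'M[C]_(2 ^ (m + n)) :=
  \matrix_(k, l) (A (bidx m (k %/ 2 ^ n)%N) (bidx m (l %/ 2 ^ n)%N)
                  * B (bidx n k) (bidx n l)).

Definition Red1 (C : numClosedFieldType) (m n : nat) (rho : 'M[C]_(2 ^ (m + n)))
  : 'M[C]_(2 ^ m) :=
  \matrix_(i, i') \sum_(j < 2 ^ n)
     rho (bidx (m + n) (i * 2 ^ n + j)%N) (bidx (m + n) (i' * 2 ^ n + j)%N).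
Definition Red2 (C : numClosedFieldType) (m n : nat) (rho : 'M[C]_(2 ^ (m + n)))
  : 'M[C]_(2 ^ n) :=
  \matrix_(j, j') \sum_(i < 2 ^ m)
     rho (bidx (m + n) (i * 2 ^ n + j)%N) (bidx (m + n) (i * 2 ^ n + j')%N).

(* Toffoli gate on H^(m+n+1): |x_1..x_m, y_1..y_n, z> |-> |x, y, x_m y_n (+) z>.
   Index k = a * 2 + z with a = i * 2^n + j; x_m = odd i, y_n = odd j. *)
Definition toff_idx (n k : nat) : nat :=
  let a := (k %/ 2)%N in
  let z := odd k in
  (a * 2 + (z (+) (odd (a %/ 2 ^ n)%N && odd a)))%N.

Definition toffoli (C : numClosedFieldType) (m n : nat) : 'M[C]_(2 ^ (m + n + 1)) :=
  \matrix_(k, l) (k == toff_idx n l :> nat)%:R.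

Definition ANDgate (C : numClosedFieldType) (m n : nat) (rho : 'M[C]_(2 ^ (m + n)))
  : 'M[C]_(2 ^ (m + n + 1)) :=
  toffoli C m n *m tensmx rho (P0 C 1) *m adjmx (toffoli C m n).

From mathcomp Require Import all_boot all_order all_algebra.
From mathcomp Require Import fingroup perm.
Set Implicit Arguments. Unset Strict Implicit. Unset Printing Implicit Defensive.
Import Order.TTheory GRing.Theory Num.Theory.
Local Open Scope ring_scope.

(* The Toffoli gate is a permutation matrix, so conjugating by it permutes the
   diagonal of [rho (x) P_0].  Hence every quantity in the theorem is a sum of
   the diagonal entries [rho_aa >= 0] weighted by a bit of the index [a]: the
   last bit of the first register for [Red1], the last bit of the second
   register for [Red2], and the conjunction of these two bits for [AND]. *)

Lemma big_nat_mulE (V : nmodType) (p q : nat) (F : nat -> V) :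
  \sum_(0 <= a < p * q) F a = \sum_(0 <= i < p) \sum_(0 <= j < q) F (i * q + j)%N.
Proof.
rewrite big_nat_mul; apply: eq_bigr => i _.
rewrite -{1}[(i * q)%N]add0n big_addn mulSn addnK.
by apply: eq_bigr => j _; rewrite addnC.
Qed.

Lemma prob1E (C : numClosedFieldType) (N : nat) (X : 'M[C]_(2 ^ N)) :
  prob1 X = \sum_(k < 2 ^ N) (odd k)%:R * X k k.
Proof.
rewrite /prob1 /mxtrace; apply: eq_bigr => k _; rewrite mxE (bigD1 k) //=.
rewrite big1 ?addr0; first by rewrite mxE eqxx.
by move=> j /negbTE neq_jk; rewrite mxE eq_sym neq_jk mul0r.
Qed.

Lemma psdmx_diag_ge0 (C : numClosedFieldType) (N : nat) (A : 'M[C]_N) :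
  psdmx A -> forall k, 0 <= A k k.
Proof.
move=> psdA k; have := psdA (delta_mx k 0).
have -> : adjmx (delta_mx k 0 : 'cV[C]_N) = delta_mx 0 k.
  by apply/matrixP => i j; rewrite /adjmx !mxE conjC_nat andbC.
by rewrite -rowE -colE !mxE.
Qed.

Section PermutationConjugation.
Variables (C : numClosedFieldType) (N : nat).

Lemma adjmx_perm_mx (s : 'S_N) : adjmx (perm_mx s : 'M[C]_N) = perm_mx s^-1.
Proof.
rewrite /adjmx -tr_perm_mx; congr _^T.
by apply/matrixP => i j; rewrite !mxE conjC_nat.
Qed.

Lemma perm_mx_conj_diag (s : 'S_N) (X : 'M[C]_N) (k : 'I_N) :
  (perm_mx s *m X *m adjmx (perm_mx s)) k k = X (s k) (s k).
Proof. by rewrite adjmx_perm_mx -row_permE -col_permE !mxE. Qed.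

End PermutationConjugation.

Lemma toff_idxK (n : nat) : involutive (toff_idx n).
Proof.
move=> k; rewrite /toff_idx; set b := (_ (+) _).
have b_lt2 : (b < 2)%N by case: (b).
rewrite divnMDl // (divn_small b_lt2) addn0 oddD oddM andbF /= oddb.
by rewrite /b -addbA addbb addbF {3}(divn_eq k 2) modn2.
Qed.

Lemma toff_idx_lt (n N k : nat) :
  (k < 2 ^ (N + 1))%N -> (toff_idx n k < 2 ^ (N + 1))%N.
Proof.
rewrite addn1 expnSr -ltn_divLR // /toff_idx; set b := (_ (+) _).
have b_lt2 : (b < 2)%N by case: (b).
by rewrite -ltn_divLR // divnMDl // (divn_small b_lt2) addn0.
Qed.

Section Toffoli.
Variables (C : numClosedFieldType) (m n : nat).

Definition toff_ord (k : 'I_(2 ^ (m + n + 1))) : 'I_(2 ^ (m + n + 1)) :=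
  Ordinal (toff_idx_lt n (ltn_ord k)).

Lemma toff_ordK : involutive toff_ord.
Proof. by move=> k; apply: val_inj; rewrite /= toff_idxK. Qed.

Definition toff_perm : 'S_(2 ^ (m + n + 1)) := perm (inv_inj toff_ordK).

Lemma toffoli_perm_mx : toffoli C m n = perm_mx toff_perm.
Proof.
apply/matrixP => k l; rewrite /perm_mx !mxE permE -val_eqE /=.
by rewrite (can2_eq (toff_idxK n) (toff_idxK n)).
Qed.

Lemma ANDgate_diag (rho : 'M[C]_(2 ^ (m + n))) (k : 'I_(2 ^ (m + n + 1))) :
  ANDgate rho k k = tensmx rho (P0 C 1) (toff_ord k) (toff_ord k).
Proof. by rewrite /ANDgate toffoli_perm_mx perm_mx_conj_diag permE. Qed.

End Toffoli.

Section Probabilities.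
Variables (C : numClosedFieldType) (m n : nat) (rho : 'M[C]_(2 ^ (m + n))).
Let r (a : nat) := rho (bidx (m + n) a) (bidx (m + n) a).

Lemma prob1_ANDgate : prob1 (ANDgate rho) =
  \sum_(0 <= a < 2 ^ (m + n)) (odd (a %/ 2 ^ n) && odd a)%:R * r a.
Proof.
transitivity (\sum_(0 <= k < 2 ^ (m + n + 1))
   (odd (toff_idx n k))%:R * (r (k %/ 2) * (~~ odd k)%:R)).
  rewrite prob1E (reindex_inj (inv_inj (@toff_ordK m n))) big_mkord.
  apply: eq_bigr => k _; rewrite ANDgate_diag toff_ordK !mxE.
  by rewrite eqxx /= expn1 modn2 oddb.
rewrite expnD expn1 big_nat_mulE; apply: eq_big_nat => a _.
rewrite big_ltn // big_nat1 !addn0 oddD !oddM !andbF /= mulr0 mulr0 addr0 mulr1.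
by rewrite mulnK // /toff_idx mulnK // oddM andbF /= oddD oddM andbF /= oddb.
Qed.

Lemma prob1_Red1 : prob1 (Red1 rho) =
  \sum_(0 <= a < 2 ^ (m + n)) (odd (a %/ 2 ^ n))%:R * r a.
Proof.
rewrite prob1E expnD big_nat_mulE big_mkord; apply: eq_bigr => i _.
rewrite mxE big_mkord mulr_sumr; apply: eq_bigr => j _.
by rewrite divnMDl ?expn_gt0 // (divn_small (ltn_ord j)) addn0.
Qed.

Lemma prob1_Red2 : (0 < n)%N -> prob1 (Red2 rho) =
  \sum_(0 <= a < 2 ^ (m + n)) (odd a)%:R * r a.
Proof.
move=> n_gt0; rewrite prob1E expnD big_nat_mulE exchange_big_nat /= big_mkord.
apply: eq_bigr => j _; rewrite mxE big_mkord mulr_sumr; apply: eq_bigr => i _.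
by rewrite oddD oddM oddX eqn0Ngt n_gt0 /= andbF.
Qed.

End Probabilities.

Lemma ler_sum_indicator (R : numDomainType) (p : nat) (w w' : nat -> bool)
    (x : nat -> R) :
  (forall a, 0 <= x a) -> (forall a, w a ==> w' a) ->
  \sum_(0 <= a < p) (w a)%:R * x a <= \sum_(0 <= a < p) (w' a)%:R * x a.
Proof.
move=> x_ge0 le_ww'; apply: ler_sum => a _; apply: ler_wpM2r => //.
by have := le_ww' a; rewrite ler_nat; case: (w a); case: (w' a).
Qed.

Theorem theorem3p10 (C : numClosedFieldType) (m n : nat) (hm : (1 <= m)%N) (hn : (1 <= n)%N)
  (rho : 'M[C]_(2 ^ (m + n))) (hrho : density rho) :
  prob1 (ANDgate rho) <= prob1 (Red1 rho) /\ prob1 (ANDgate rho) <= prob1 (Red2 rho).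
Proof.
have diag_ge0 a : 0 <= rho (bidx (m + n) a) (bidx (m + n) a).
  exact: (psdmx_diag_ge0 hrho.1).
rewrite prob1_ANDgate prob1_Red1 prob1_Red2 //.
by split; apply: ler_sum_indicator => // a; apply/implyP => /andP[].
Qed.
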